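(* Let $0<c\le\tfrac12$. Suppose Skeptic starts with capital $\mathcal{K}_0=1$ and plays $\mathcal{P}_c$: $M_n=-c\,\overline{x}_{n-1}\mathcal{K}_{n-1}$ for all $n\ge1$. His capital is then \[ \mathcal{K}_n=\prod_{i=2}^n\bigl(1-c\,\overline{x}_{i-1}x_i\bigr). \] Then $\mathcal{K}_n(\xi)\ge0$ for all $\xi\in\Omega$ and all $n$. Moreover $\mathcal{K}_n(\xi)\to\infty$ for every path $\xi\notin E_1^c$, where \[ E_1^c:=\{\xi:\ \limsup_{n\to\infty}(1+2c)\sqrt n\,|\overline{x}_n|\ge1\}. \] That is, Skeptic can force $E_1^c$ with $\mathcal{P}_c$.
   Context: Fair-coin game: the initial capital is $\mathcal{K}_0$. In rounds $n=1,2,\dots$ Skeptic announces $M_n\in\mathbb{R}$ (depending only on $x_1,\dots,x_{n-1}$), then Reality announces $x_n\in\{-1,1\}$, and $\mathcal{K}_n:=\mathcal{K}_{n-1}+M_nx_n$. A path is an infinite sequence $\xi=x_1x_2\cdots\in\{-1,1\}^{\mathbb{N}}$, and $\Omega$ is the set of paths. We write $s_n:=x_1+\cdots+x_n$ and $\overline{x}_n:=s_n/n$, with $s_0=\overline{x}_0=0$. Skeptic forces an event $E$ if he has a strategy such that, starting from capital $1$, his capital is nonnegative at all times on all paths and tends to $\infty$ on every path not in $E$. *)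

From Stdlib Require Import Reals.
From Coquelicot Require Import Coquelicot.
Open Scope R_scope.

(* A path is x : nat -> R; only x 1, x 2, ... are used (x_n = x n for n >= 1);
   the hypothesis that x n is in {-1,1} for n >= 1 is put in the theorem. *)
Definition is_path (x : nat -> R) : Prop :=
  forall n : nat, (1 <= n)%nat -> x n = 1 \/ x n = -1.

Fixpoint psum (x : nat -> R) (n : nat) : R :=
  match n with
  | O => 0
  | S m => psum x m + x (S m)
  end.

Definition xbar (x : nat -> R) (n : nat) : R :=
  match n with
  | O => 0
  | _ => psum x n / INR n
  end.

(* Capital of Skeptic in the fair-coin game, K_0 = 1, playing P_c:
   M_n = - c * xbar_{n-1} * K_{n-1};  K_n = K_{n-1} + M_n * x_n. *)
Fixpoint capital (c : R) (x : nat -> R) (n : nat) : R :=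
  match n with
  | O => 1
  | S m => capital c x m + (- c * xbar x m * capital c x m) * x (S m)
  end.

Fixpoint prod_upto (f : nat -> R) (n : nat) : R :=
  match n with
  | O => 1
  | S m => prod_upto f m * f (S m)
  end.
Definition prod_range (a n : nat) (f : nat -> R) : R :=
  prod_upto (fun i => if Nat.leb a i then f i else 1) n.

(* Write y_m := -c xbar_m x_(m+1), so K_(m+1) = K_m (1 + y_m) with |y_m| <= c <= 1/2;
   in particular the capital stays positive.  Using ln (1 + y) >= y - 2 y^2 and
   s_(m+1)^2 = s_m^2 + 2 s_m x_(m+1) + 1, the increment ln (1 + y_m) is at least
   Phi_m - Phi_(m+1) + (c/2 - c/2 A_(m+1) - 2 c^2 A_m) / m, where A_n := n xbar_n^2
   and Phi_n := c/2 A_n.  If the limsup of (1+2c) sqrt n |xbar_n| is below 1, then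
   eventually (1+2c)^2 A_n <= b for some b < 1, the numerator is at least c/2 (1-b),
   and summing gives ln K_n >= C + c/2 (1-b) ln n, which tends to infinity. *)

From Stdlib Require Import Reals Lra Lia Psatz.
From Coquelicot Require Import Coquelicot.
Open Scope R_scope.

Lemma ln_1plus_ge (y : R) : -1/2 <= y <= 1/2 -> y - 2 * y^2 <= ln (1 + y).
Proof.
  intros Hy. set (t := y - 2 * y^2).
  assert (Ht : 0 < 1 - t) by (unfold t; nra).
  assert (Hexp_t : exp t * (1 - t) <= 1).
  { pose proof (exp_ineq1_le (- t)) as He. rewrite exp_Ropp in He.
    pose proof (exp_pos t).
    apply (Rmult_le_reg_r (/ exp t)); [apply Rinv_0_lt_compat; lra|].
    replace (exp t * (1 - t) * / exp t) with (1 - t) by (field; lra). lra. }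
  assert (Hprod : 1 <= (1 + y) * (1 - t)).
  { replace ((1 + y) * (1 - t)) with (1 + y^2 * (1 + 2 * y)) by (unfold t; ring).
    assert (0 <= y^2 * (1 + 2 * y)) by (apply Rmult_le_pos; nra). lra. }
  rewrite <- (ln_exp t). apply ln_le; [apply exp_pos|].
  apply (Rmult_le_reg_r (1 - t)); lra.
Qed.

Lemma ln_S_sub_ln_le_inv (m : nat) : (1 <= m)%nat -> ln (INR (S m)) - ln (INR m) <= / INR m.
Proof.
  intros Hm. assert (Hm0 : 0 < INR m) by (apply lt_0_INR; lia).
  rewrite S_INR, <- ln_div by lra.
  replace ((INR m + 1) / INR m) with (1 + / INR m) by (field; lra).
  rewrite <- (ln_exp (/ INR m)) at 2.
  apply ln_le; [pose proof (Rinv_0_lt_compat _ Hm0); lra | apply exp_ineq1_le].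
Qed.

Lemma LimSup_seq_lt_eventually (u : nat -> R) (a : R) :
  ~ Rbar_le a (LimSup_seq u) -> exists q N, q < a /\ forall n, (N <= n)%nat -> u n < q.
Proof.
  intros Hnot. destruct (ex_LimSup_seq u) as [l Hl].
  rewrite (is_LimSup_seq_unique _ _ Hl) in Hnot.
  destruct l as [r| |]; simpl in Hnot.
  - assert (he : 0 < (a - r) / 2) by lra.
    destruct (Hl (mkposreal _ he)) as [_ [N HN]].
    exists (r + (a - r) / 2), N; split; [lra | exact HN].
  - exfalso; apply Hnot; exact I.
  - destruct (Hl (a - 1)) as [N HN]. exists (a - 1), N; split; [lra | exact HN].
Qed.

Lemma is_lim_seq_p_infty_of_ln_ge (u : nat -> R) (C eps : R) (N : nat) :
  (forall n, 0 < u n) -> 0 < eps ->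
  (forall n, (N <= n)%nat -> C + eps * ln (INR n) <= ln (u n)) ->
  is_lim_seq u p_infty.
Proof.
  intros Hpos Heps Hlow. apply is_lim_seq_spec. intros M.
  set (M' := Rmax M 1). set (T := (ln M' - C) / eps).
  assert (HM' : 0 < M') by (pose proof (Rmax_r M 1); unfold M'; lra).
  destruct (INR_archimed 1 (exp T) ltac:(lra)) as [n0 Hn0].
  exists (Nat.max N n0). intros n Hn.
  assert (HT : T < ln (INR n)).
  { rewrite <- (ln_exp T). apply ln_increasing; [apply exp_pos|].
    pose proof (le_INR n0 n ltac:(lia)). lra. }
  assert (Hlt : ln M' < ln (u n)).
  { assert (Hm : eps * T < eps * ln (INR n)) by (apply Rmult_lt_compat_l; lra).
    replace (eps * T) with (ln M' - C) in Hm by (unfold T; field; lra).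
    pose proof (Hlow n ltac:(lia)). lra. }
  pose proof (exp_increasing _ _ Hlt) as He.
  rewrite !exp_ln in He by auto. pose proof (Rmax_l M 1). unfold M' in *. lra.
Qed.

Lemma capital_S (c : R) (x : nat -> R) (m : nat) :
  capital c x (S m) = capital c x m * (1 - c * xbar x m * x (S m)).
Proof. simpl; ring. Qed.

Lemma capital_eq_prod_range (c : R) (x : nat -> R) (n : nat) :
  capital c x n = prod_range 2 n (fun i => 1 - c * xbar x (i - 1) * x i).
Proof.
  induction n as [|m IH]; [reflexivity|].
  rewrite capital_S, IH. unfold prod_range; simpl prod_upto. f_equal.
  destruct m as [|m]; simpl.
  - ring.
  - replace (m - 0)%nat with m by lia. reflexivity.
Qed.

Lemma xbar_S (x : nat -> R) (n : nat) : xbar x (S n) = psum x (S n) / INR (S n).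
Proof. reflexivity. Qed.

Definition potential (c : R) (x : nat -> R) (n : nat) : R := c / 2 * (INR n * xbar x n ^ 2).

Section PathCapital.

Variables (c : R) (x : nat -> R).
Hypotheses (hc0 : 0 < c) (hc1 : c <= 1/2) (Hp : is_path x).

Lemma Rabs_psum_le (n : nat) : Rabs (psum x n) <= INR n.
Proof.
  induction n as [|n IH]; cbn [psum].
  - simpl; rewrite Rabs_R0; lra.
  - rewrite S_INR. apply Rabs_le_between in IH.
    destruct (Hp (S n) ltac:(lia)) as [H|H]; rewrite H; apply Rabs_le; lra.
Qed.

Lemma Rabs_xbar_le1 (n : nat) : Rabs (xbar x n) <= 1.
Proof.
  destruct n as [|n]; [simpl; rewrite Rabs_R0; lra|].
  rewrite xbar_S. pose proof (Rabs_psum_le (S n)). pose proof (lt_0_INR (S n) ltac:(lia)).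
  unfold Rdiv; rewrite Rabs_mult, Rabs_inv, (Rabs_right (INR (S n))) by lra.
  apply (Rmult_le_reg_r (INR (S n))); [lra|].
  rewrite Rmult_assoc, Rinv_l by lra; lra.
Qed.

Lemma capital_increment_bounds (m : nat) :
  -1/2 <= - c * xbar x m * x (S m) <= 1/2.
Proof.
  pose proof (Rabs_xbar_le1 m) as Hb. apply Rabs_le_between in Hb.
  destruct (Hp (S m) ltac:(lia)) as [H|H]; rewrite H; split; nra.
Qed.

Lemma capital_pos (n : nat) : 0 < capital c x n.
Proof.
  induction n as [|n IH]; [simpl; lra|].
  rewrite capital_S. pose proof (capital_increment_bounds n). nra.
Qed.

Lemma ln_capital_S (m : nat) :
  ln (capital c x (S m)) = ln (capital c x m) + ln (1 + - c * xbar x m * x (S m)).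
Proof.
  pose proof (capital_increment_bounds m).
  rewrite capital_S, ln_mult by (try apply capital_pos; lra).
  f_equal; f_equal; ring.
Qed.

(* The square of s_(m+1) = s_m + x_(m+1) turns y - 2 y^2 into a telescoping term
   plus an O(1/m) remainder. *)
Lemma ln_increment_expand (m : nat) : (1 <= m)%nat ->
  let y := - c * xbar x m * x (S m) in
  y - 2 * y^2 = potential c x m - potential c x (S m)
    + (c/2 - c/2 * (INR (S m) * xbar x (S m) ^ 2) - 2 * c^2 * (INR m * xbar x m ^ 2)) / INR m.
Proof.
  intros Hm y. assert (Hm0 : 0 < INR m) by (apply lt_0_INR; lia).
  unfold y, potential. destruct m as [|m]; [lia|]. rewrite !xbar_S.
  cbn [psum]. rewrite !S_INR.
  destruct (Hp (S (S m)) ltac:(lia)) as [Hx|Hx]; rewrite Hx; field; rewrite <- S_INR in *; lra.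
Qed.

Lemma ln_increment_ge (b : R) (m : nat) : b < 1 -> (1 <= m)%nat ->
  (1 + 2 * c)^2 * (INR (S m) * xbar x (S m) ^ 2) <= b ->
  (1 + 2 * c)^2 * (INR m * xbar x m ^ 2) <= b ->
  potential c x m - potential c x (S m) + c/2 * (1 - b) * (ln (INR (S m)) - ln (INR m))
    <= ln (1 + - c * xbar x m * x (S m)).
Proof.
  intros hb Hm hA hB.
  pose proof (ln_1plus_ge _ (capital_increment_bounds m)) as Hl.
  rewrite (ln_increment_expand m Hm) in Hl.
  assert (HM : 0 < INR m) by (apply lt_0_INR; lia).
  set (A := INR (S m) * xbar x (S m) ^ 2) in *.
  set (B := INR m * xbar x m ^ 2) in *.
  assert (HA : 0 <= A) by (apply Rmult_le_pos; [apply pos_INR | nra]).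
  assert (HB : 0 <= B) by (apply Rmult_le_pos; [apply pos_INR | nra]).
  (* (1+2c)^2 >= 1+4c is what makes the coefficient 2c^2 of A_m affordable *)
  assert (Hnum : c/2 * (1 - b) <= c/2 - c/2 * A - 2 * c^2 * B).
  { apply (Rmult_le_reg_l (1 + 4 * c)); [lra|].
    assert (c/2 * ((1 + 4 * c) * A) <= c/2 * b) by (apply Rmult_le_compat_l; nra).
    assert (2 * c^2 * ((1 + 4 * c) * B) <= 2 * c^2 * b) by (apply Rmult_le_compat_l; nra).
    nra. }
  pose proof (ln_S_sub_ln_le_inv m Hm) as Hs.
  assert (c/2 * (1 - b) * (ln (INR (S m)) - ln (INR m)) <= c/2 * (1 - b) / INR m)
    by (unfold Rdiv; apply Rmult_le_compat_l; nra).
  assert (c/2 * (1 - b) / INR m <= (c/2 - c/2 * A - 2 * c^2 * B) / INR m)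
    by (unfold Rdiv; apply Rmult_le_compat_r; [apply Rlt_le, Rinv_0_lt_compat |]; lra).
  lra.
Qed.

Lemma ln_capital_ge (b : R) (N : nat) : b < 1 -> (1 <= N)%nat ->
  (forall n, (N <= n)%nat -> (1 + 2 * c)^2 * (INR n * xbar x n ^ 2) <= b) ->
  forall n, (N <= n)%nat ->
  ln (capital c x N) + potential c x N - c/2 * b - c/2 * (1 - b) * ln (INR N)
    + c/2 * (1 - b) * ln (INR n) <= ln (capital c x n).
Proof.
  intros hb HN Hbnd.
  assert (Htele : forall k, ln (capital c x N) + potential c x N - potential c x (N + k)
      + c/2 * (1 - b) * (ln (INR (N + k)) - ln (INR N)) <= ln (capital c x (N + k))).
  { induction k as [|k IH].
    - rewrite Nat.add_0_r. lra.
    - rewrite Nat.add_succ_r, ln_capital_S.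
      pose proof (ln_increment_ge b (N + k) hb ltac:(lia)
        (Hbnd (S (N + k)) ltac:(lia)) (Hbnd (N + k)%nat ltac:(lia))). lra. }
  intros n Hn. replace n with (N + (n - N))%nat by lia.
  pose proof (Htele (n - N)%nat).
  assert (potential c x (N + (n - N)) <= c/2 * b).
  { unfold potential. apply Rmult_le_compat_l; [lra|].
    pose proof (Hbnd (N + (n - N))%nat ltac:(lia)).
    assert (0 <= INR (N + (n - N)) * xbar x (N + (n - N)) ^ 2)
      by (apply Rmult_le_pos; [apply pos_INR | nra]).
    nra. }
  lra.
Qed.

Lemma capital_forces_E1c :
  ~ Rbar_le (Finite 1) (LimSup_seq (fun n => (1 + 2 * c) * sqrt (INR n) * Rabs (xbar x n))) ->
  is_lim_seq (capital c x) p_infty.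
Proof.
  set (u := fun n => (1 + 2 * c) * sqrt (INR n) * Rabs (xbar x n)).
  intros Hnot.
  assert (Hu0 : forall n, 0 <= u n).
  { intros n. apply Rmult_le_pos; [apply Rmult_le_pos; [lra | apply sqrt_pos] | apply Rabs_pos]. }
  assert (Hu2 : forall n, u n ^ 2 = (1 + 2 * c)^2 * (INR n * xbar x n ^ 2)).
  { intros n. unfold u. rewrite !Rpow_mult_distr, <- !Rsqr_pow2, Rsqr_sqrt, <- Rsqr_abs
      by apply pos_INR. ring. }
  destruct (LimSup_seq_lt_eventually u 1 Hnot) as [q [N0 [Hq1 HqN]]].
  assert (Hq0 : 0 <= q) by (pose proof (HqN N0 (le_n _)); pose proof (Hu0 N0); lra).
  assert (Hbnd : forall n, (Nat.max N0 1 <= n)%nat -> (1 + 2 * c)^2 * (INR n * xbar x n ^ 2) <= q^2).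
  { intros n Hn. rewrite <- Hu2. pose proof (HqN n ltac:(lia)). pose proof (Hu0 n). nra. }
  assert (Hq2 : q^2 < 1) by nra.
  eapply (is_lim_seq_p_infty_of_ln_ge _ _ (c/2 * (1 - q^2)) (Nat.max N0 1) capital_pos).
  - nra.
  - apply (ln_capital_ge (q^2)); [exact Hq2 | lia | exact Hbnd].
Qed.

End PathCapital.

Theorem lemma1 (c : R) (hc0 : 0 < c) (hc1 : c <= 1 / 2) :
  (forall x : nat -> R, is_path x -> forall n : nat,
      capital c x n = prod_range 2 n (fun i => 1 - c * xbar x (i - 1) * x i))
  /\ (forall x : nat -> R, is_path x -> forall n : nat, 0 <= capital c x n)
  /\ (forall x : nat -> R, is_path x ->
      ~ Rbar_le (Finite 1)
          (LimSup_seq (fun n => (1 + 2 * c) * sqrt (INR n) * Rabs (xbar x n))) ->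
      is_lim_seq (capital c x) p_infty).
Proof.
  split; [|split].
  - intros x _ n; apply capital_eq_prod_range.
  - intros x Hp n; apply Rlt_le, capital_pos; assumption.
  - intros x Hp; apply capital_forces_E1c; assumption.
Qed.
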